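(* For any $\delta\in(0,1)$ there exists a constant $c(\delta)>0$ such that the following holds. Let $G=(V,E)$ be a simple graph on $n$ vertices with minimal degree at least $\delta n$. Then $\gamma(G)\ge c(\delta)\,\Phi(G)$.
   Context: Let $P$ be the transition matrix of the simple random walk on $G$ and $\pi(v)=\deg(v)/2|E|$ its stationary distribution. $P$ is self-adjoint on $L^2(\pi)$ with real eigenvalues $1=\lambda_1\ge\lambda_2\ge\dots\ge\lambda_n\ge -1$; the spectral gap is $\gamma(G)=1-\lambda_2$. For $S\subseteq V$, $\mathrm{Vol}(S)=\sum_{v\in S}\deg(v)$, $\partial S=\{(u,v)\in E: u\in S, v\notin S\}$, $\pi(S)=\sum_{v\in S}\pi(v)$, and the Cheeger constant is $\Phi(G)=\min_{S:\pi(S)\le 1/2}|\partial S|/\mathrm{Vol}(S)$. *)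

From HB Require Import structures.
From mathcomp Require Import all_boot all_order all_algebra.
From mathcomp Require Import reals.
Set Implicit Arguments. Unset Strict Implicit. Unset Printing Implicit Defensive.
Import Order.TTheory GRing.Theory Num.Theory.
Local Open Scope ring_scope.

Section Graph.
Variable n : nat.
Variable e : rel 'I_n.

Definition simple_graph := symmetric e /\ irreflexive e.

Definition deg (v : 'I_n) : nat := #|[set u | e v u]|.

Definition Vol (S : {set 'I_n}) : nat := (\sum_(v in S) deg v)%N.

Definition bdry (S : {set 'I_n}) : nat :=
  #|[set p : 'I_n * 'I_n | [&& p.1 \in S, p.2 \notin S & e p.1 p.2]]|.

Variable R : realType.

(* stationary measure: pi(S) = Vol(S) / (2|E|) = Vol(S) / Vol(V) *)
Definition piS (S : {set 'I_n}) : R := (Vol S)%:R / (Vol setT)%:R.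

Definition trans_mx : 'M[R]_n :=
  \matrix_(i, j) (if e i j then ((deg i)%:R)^-1 else 0).

(* Cheeger constant: min over nonempty S with pi(S) <= 1/2 of |dS|/Vol(S).
   The default 1 of the big min is harmless since |dS| <= Vol(S). *)
Definition cheeger : R :=
  \big[Order.min/1]_(S : {set 'I_n} | (S != set0) && (piS S <= 2^-1))
     ((bdry S)%:R / (Vol S)%:R).

Definition sorted_spectrum (s : seq R) :=
  sorted (>=%R) s /\ char_poly trans_mx = \prod_(x <- s) ('X - x%:P).

End Graph.

(* Let u be a left eigenvector of P for lambda_2 with zero sum, rescaled by the degrees; then
   E(u) = 2 (1 - lambda_2) ||u||^2, where E is the Dirichlet form and ||u||^2 = sum_i d_i u_i^2.
   It remains to prove a Poincare inequality Phi ||u||^2 <= C E(u) for balanced u, with C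
   depending only on delta.  Cutting u at a median reduces it to nonnegative g whose superlevel
   sets have at most half the volume.  Apply the definition of Phi to the superlevel sets
   {g > t_k} of a geometric grid t_k = m 4^k, but only at "free" levels k: those with no good
   vertex in (t_k, t_(k+1)], where i is good if more than half of its neighbours j satisfy
   |g_j - g_i| <= g_i / 2.  A bad vertex pays for its own mass d_i g_i^2 in E(g).  Good vertices
   in bands two levels apart have disjoint sets of close neighbours, each of size more than
   delta n / 2, so among L + 1 >= 2 / delta such bands one is free: every good vertex lies at most
   2 L + 1 levels above a free level, which controls its mass, while an edge crossing free
   levels costs at most (g_i - g_j)^2 + 2 [i bad] g_i^2. *)

From HB Require Import structures.
From mathcomp Require Import all_boot all_order all_algebra.
From mathcomp Require Import reals.
From mathcomp Require Import ring lra zify.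
Set Implicit Arguments. Unset Strict Implicit. Unset Printing Implicit Defensive.
Import Order.TTheory GRing.Theory Num.Theory.
Local Open Scope ring_scope.

Local Ltac nonneg := do ![exact: ler0n | exact: sqr_ge0 | apply: mulr_ge0 | apply: addr_ge0].

Section Energy.
Variables (R : realType) (n : nat) (e : rel 'I_n).
Local Notation d i := ((deg e i)%:R : R).

Definition local_energy (g : 'I_n -> R) i := \sum_j (e i j)%:R * (g i - g j) ^+ 2.
Definition dirichlet (g : 'I_n -> R) := \sum_i local_energy g i.
Definition deg_sqnorm (g : 'I_n -> R) := \sum_i d i * g i ^+ 2.

Lemma degE i : d i = \sum_j (e i j)%:R.
Proof.
rewrite /deg -sum1dep_card natr_sum big_mkcond /=.
by apply: eq_bigr => j _; case: (e i j).
Qed.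

Lemma local_energy_ge0 g i : 0 <= local_energy g i.
Proof. by apply: sumr_ge0 => j _; rewrite mulr_ge0 ?ler0n ?sqr_ge0. Qed.

Lemma dirichlet_ge0 g : 0 <= dirichlet g.
Proof. by apply: sumr_ge0 => i _; apply: local_energy_ge0. Qed.

Hypothesis e_sym : symmetric e.

Lemma dirichlet_eigen (u : 'I_n -> R) (lam : R) :
  (forall j, \sum_i (e i j)%:R * u i = lam * d j * u j) ->
  dirichlet u = 2 * (1 - lam) * deg_sqnorm u.
Proof.
move=> u_eigen.
have -> : dirichlet u = \sum_i \sum_j (e i j)%:R * u i ^+ 2
    + \sum_i \sum_j (e i j)%:R * u j ^+ 2
    - 2 * \sum_i \sum_j (e i j)%:R * u i * u j.
  rewrite mulr_sumr -!big_split -sumrB /=.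
  apply: eq_bigr => i _; rewrite !mulr_sumr -!big_split -sumrB /=.
  by apply: eq_bigr => j _; ring.
have -> : \sum_i \sum_j (e i j)%:R * u i * u j = lam * deg_sqnorm u.
  rewrite exchange_big /deg_sqnorm mulr_sumr; apply: eq_bigr => j _.
  have -> : lam * (d j * u j ^+ 2) = (lam * d j * u j) * u j by ring.
  by rewrite -u_eigen mulr_suml; apply: eq_bigr => i _; ring.
have -> : \sum_i \sum_j (e i j)%:R * u i ^+ 2 = deg_sqnorm u.
  by apply: eq_bigr => i _; rewrite -mulr_suml degE.
have -> : \sum_i \sum_j (e i j)%:R * u j ^+ 2 = deg_sqnorm u.
  rewrite exchange_big; apply: eq_bigr => j _; rewrite -mulr_suml degE.
  by congr (_ * _); apply: eq_bigr => i _; rewrite e_sym.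
ring.
Qed.

End Energy.

Section Cheeger.
Variables (R : realType) (n : nat) (e : rel 'I_n).
Local Notation d i := ((deg e i)%:R : R).

Lemma VolE (S : {set 'I_n}) : (Vol e S)%:R = \sum_i (i \in S)%:R * d i :> R.
Proof.
rewrite /Vol natr_sum big_mkcond /=; apply: eq_bigr => i _.
by case: (i \in S); rewrite ?mul1r ?mul0r.
Qed.

Lemma bdryE (S : {set 'I_n}) :
  (bdry e S)%:R = \sum_i \sum_j ((e i j) && (i \in S) && (j \notin S))%:R :> R.
Proof.
rewrite /bdry -sum1dep_card natr_sum pair_big /= big_mkcond /=.
by apply: eq_bigr => [[i j]] _ /=; case: (e i j); case: (i \in S); case: (j \in S).
Qed.

Lemma Vol_subset (S U : {set 'I_n}) : S \subset U -> (Vol e S <= Vol e U)%N.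
Proof.
by move=> SU; rewrite /Vol [X in (_ <= X)%N](big_setID S) /= (setIidPr SU) leq_addr.
Qed.

Lemma Vol_setC (S : {set 'I_n}) : (Vol e S + Vol e (~: S))%N = Vol e setT.
Proof. by rewrite /Vol [in RHS](big_setID S) /= setTI setTD. Qed.

Lemma cheeger_ge0 : 0 <= cheeger e R.
Proof. by apply: le_bigmin => [|S _]; rewrite ?ler01 ?divr_ge0 ?ler0n. Qed.

Lemma cheeger_le1 : cheeger e R <= 1.
Proof. exact: bigmin_le_id. Qed.

Lemma cheeger_Vol_le (S : {set 'I_n}) : (2 * Vol e S <= Vol e setT)%N ->
  cheeger e R * (Vol e S)%:R <= (bdry e S)%:R.
Proof.
move=> S_half; have [->|VolS_gt0] := posnP (Vol e S); first by rewrite mulr0.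
have S_admissible : (S != set0) && (piS e R S <= 2^-1).
  apply/andP; split.
    by apply: contraTneq VolS_gt0 => ->; rewrite /Vol big_set0.
  rewrite /piS ler_pdivrMr ?ltr0n; last by apply: leq_trans S_half; lia.
  by move: S_half; rewrite -(ler_nat R) natrM => ?; lra.
have := @bigmin_le_cond _ _ _ (1 : R) S (fun S => (S != set0) && (piS e R S <= 2^-1))
  (fun S => (bdry e S)%:R / (Vol e S)%:R) S_admissible.
by rewrite -/(cheeger e R) ler_pdivlMr ?ltr0n.
Qed.

Lemma median_exists (u : 'I_n -> R) : (0 < n)%N -> exists m : R,
  (2 * Vol e [set i | (m < u i)%R] <= Vol e setT)%N /\
  (2 * Vol e [set i | (u i < m)%R] <= Vol e setT)%N.
Proof.
move=> n_gt0; pose heavy j := (Vol e setT <= 2 * Vol e [set i | (u j <= u i)%R])%N.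
have [jmin _ jmin_min] := arg_minP u (isT : xpredT (Ordinal n_gt0)).
have heavy_jmin : heavy jmin.
  rewrite /heavy (_ : [set i | u jmin <= u i] = setT) ?leq_pmull //.
  by apply/setP => i; rewrite !inE jmin_min.
have [j heavy_j j_max] := arg_maxP u heavy_jmin.
exists (u j); split; last first.
  have := Vol_setC [set i | u j <= u i].
  rewrite (_ : ~: _ = [set i | u i < u j]); last by apply/setP => i; rewrite !inE -ltNge.
  by move: heavy_j; rewrite /heavy; lia.
have [->|[k]] := set_0Vmem [set i | u j < u i]; first by rewrite /Vol big_set0.
rewrite inE => ujk; have [k' ujk' k'_min] := arg_minP u (ujk : (fun i => u j < u i) k).
rewrite (_ : [set i | u j < u i] = [set i | u k' <= u i]); last first.
  by apply/setP => i; rewrite !inE; apply/idP/idP => [/k'_min|/(lt_le_trans ujk')].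
have : ~~ heavy k' by apply: contraTN ujk' => /j_max; rewrite -leNgt.
by rewrite /heavy -ltnNge => /ltnW.
Qed.

End Cheeger.

Section Deflation.
Variables (F : fieldType) (n : nat) (P : 'M[F]_n.+1).
Hypothesis P_stochastic : forall i, \sum_j P i j = 1.

Definition shear_nil : 'M[F]_n.+1 := \matrix_(i, j) ((j == ord0) && (i != ord0))%:R.

Lemma shear_nil_sqr : shear_nil *m shear_nil = 0.
Proof.
apply/matrixP => i k; rewrite !mxE big1 // => j _; rewrite !mxE.
by case: (eqVneq j ord0) => _; rewrite /= ?andbF ?mulr0 ?mul0r.
Qed.

(* [shear] maps the first basis vector to the all-ones vector, a right eigenvector of [P]. *)
Definition shear : 'M[F]_n.+1 := 1 + shear_nil.
Definition shear_inv : 'M[F]_n.+1 := 1 - shear_nil.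

Lemma shearK : shear *m shear_inv = 1%:M.
Proof.
have := shear_nil_sqr; rewrite /shear /shear_inv !mulmxE => nil2.
by rewrite mulrDl mulrBr !mul1r mulrBr mulr1 nil2 subr0 subrK.
Qed.

Lemma shear_invK : shear_inv *m shear = 1%:M.
Proof.
have := shear_nil_sqr; rewrite /shear /shear_inv !mulmxE => nil2.
by rewrite mulrBl mulrDr !mul1r mulrDr mulr1 nil2 addr0 addrK.
Qed.

Lemma shear_nil_mull m (X : 'M[F]_(n.+1, m)) i k :
  (shear_nil *m X) i k = (i != ord0)%:R * X ord0 k.
Proof.
rewrite !mxE (bigD1 ord0) //= big1 ?addr0; first by rewrite !mxE eqxx.
by move=> j /negPf j_neq0; rewrite !mxE j_neq0 mul0r.
Qed.

Lemma shear_nil_mulr m (X : 'M[F]_(m, n.+1)) i k :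
  (X *m shear_nil) i k = (k == ord0)%:R * \sum_(j | j != ord0) X i j.
Proof.
rewrite !mxE mulr_sumr [RHS]big_mkcond /=; apply: eq_bigr => j _; rewrite !mxE.
by case: (j != ord0); case: (k == ord0); rewrite ?mulr0 ?mul0r ?mulr1 ?mul1r.
Qed.

Definition sheared : 'M[F]_n.+1 := shear_inv *m P *m shear.

Lemma sheared_col0 i : sheared i ord0 = (i == ord0)%:R.
Proof.
have P_shear j : (P *m shear) j ord0 = 1.
  rewrite mulmxDr mulmx1 mxE shear_nil_mulr eqxx mul1r.
  by rewrite -[RHS](P_stochastic j) [RHS](bigD1 ord0).
have sub_mxE (A B : 'M[F]_n.+1) a b : (A - B) a b = A a b - B a b by rewrite !mxE.
rewrite /sheared -mulmxA mulmxBl mul1mx sub_mxE shear_nil_mull !P_shear.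
by case: (eqVneq i ord0); rewrite ?mulr1 ?subrr ?mulr0 ?subr0.
Qed.

Definition deflate : 'M[F]_n := row' ord0 (col' ord0 sheared).

Lemma char_poly_sheared : char_poly P = char_poly sheared.
Proof.
rewrite /char_poly /char_poly_mx.
have -> : 'X%:M - map_mx polyC sheared =
    map_mx polyC shear_inv *m ('X%:M - map_mx polyC P) *m map_mx polyC shear.
  rewrite mulmxBr mulmxBl /sheared !map_mxM; congr (_ - _).
  rewrite mul_mx_scalar -scalemxAl -mul_scalar_mx -map_mxM shear_invK map_mx1.
  by rewrite mul_scalar_mx scalemx1.
by rewrite !det_mulmx mulrC mulrA -det_mulmx -map_mxM shearK map_mx1 det1 mul1r.
Qed.

Lemma char_poly_deflate : char_poly P = ('X - 1%:P) * char_poly deflate.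
Proof.
have cpE m (A : 'M[F]_m) i j : char_poly_mx A i j = 'X *+ (i == j) - (A i j)%:P.
  by rewrite !mxE.
rewrite char_poly_sheared /char_poly (expand_det_col _ ord0) big_ord_recl /=.
rewrite big1 ?addr0; last first.
  by move=> k _; rewrite cpE sheared_col0 lift_eqF /= mulr0n subrr mul0r.
rewrite cpE sheared_col0 eqxx /= mulr1n /cofactor /= expr0 mul1r.
by rewrite row'_col'_char_poly_mx.
Qed.

Lemma deflate_eigenvector lam : root (char_poly deflate) lam ->
  exists v : 'rV[F]_n.+1, [/\ v != 0, v *m P = lam *: v & \sum_j v ord0 j = 0].
Proof.
rewrite -eigenvalue_root_char => /eigenvalueP [w w_eigen w_neq0].
pose x : 'rV[F]_n.+1 := \row_j (if unlift ord0 j is Some k then w ord0 k else 0).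
have x_lift k : x ord0 (lift ord0 k) = w ord0 k by rewrite mxE liftK.
have x0 : x ord0 ord0 = 0 by rewrite mxE unlift_none.
have x_eigen : x *m sheared = lam *: x.
  apply/rowP => j; rewrite !mxE big_ord_recl /= x0 mul0r add0r.
  under eq_bigr do rewrite x_lift.
  case: (unliftP ord0 j) => [l ->|->].
    have := congr1 (fun M : 'rV[F]_n => M ord0 l) w_eigen; rewrite !mxE => <-.
    by apply: eq_bigr => i _; rewrite !mxE.
  by rewrite mulr0 big1 // => i _; rewrite sheared_col0 lift_eqF mulr0.
exists (x *m shear_inv); split.
- apply: contra w_neq0 => /eqP x_shear0.
  have x_eq0 : x = 0 by rewrite -(mulmx1 x) -shear_invK mulmxA x_shear0 mul0mx.
  by apply/eqP/rowP => k; rewrite -x_lift x_eq0 !mxE.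
- have -> : x *m shear_inv *m P = x *m sheared *m shear_inv.
    by rewrite /sheared !mulmxA -(mulmxA _ shear shear_inv) shearK mulmx1.
  by rewrite x_eigen scalemxAl.
- have x_sum : \sum_j x ord0 j = \sum_(j | j != ord0) x ord0 j.
    by rewrite (bigD1 ord0) //= x0 add0r.
  have xN_sum : \sum_k (x *m shear_nil) ord0 k = \sum_(j | j != ord0) x ord0 j.
    under eq_bigr do rewrite shear_nil_mulr.
    by rewrite -mulr_suml (bigD1 ord0) //= big1 ?addr0 ?mul1r // => k /negPf ->.
  rewrite mulmxBr mulmx1 (eq_bigr (fun j => x ord0 j - (x *m shear_nil) ord0 j)); last first.
    by move=> j _; rewrite !mxE.
  by rewrite sumrB x_sum xN_sum subrr.
Qed.

End Deflation.

Section Grid.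
Variables (R : realType) (m : R).
Hypothesis m_gt0 : 0 < m.

Definition level k : R := m * 4%:R ^+ k.
Local Notation t := level.

Lemma level_gt0 k : 0 < t k.
Proof. by rewrite /level mulr_gt0 // exprn_gt0. Qed.

Lemma levelS k : t k.+1 = 4%:R * t k.
Proof. by rewrite /level exprS; ring. Qed.

Lemma levelD k l : t (k + l) = 4%:R ^+ l * t k.
Proof. by rewrite /level exprD; ring. Qed.

Lemma ler_level k l : (k <= l)%N -> t k <= t l.
Proof. by move=> kl; rewrite /level ler_pM2l // ler_eXn2l // ltr1n. Qed.

Lemma sum_level_sqr_le N : \sum_(k < N.+1) t k ^+ 2 <= 16%:R / 15%:R * t N ^+ 2.
Proof.
elim: N => [|N IH].
  by rewrite big_ord1 ler_peMl ?sqr_ge0 // ler_pdivlMr ?ltr0n // mul1r ler_nat.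
by rewrite big_ord_recr /= levelS; have := sqr_ge0 (t N); lra.
Qed.

Lemma sum_level_lt_sqr_le (X : R) N :
  \sum_(k < N) (t k < X)%R%:R * t k ^+ 2 <= 16%:R / 15%:R * X ^+ 2.
Proof.
elim: N => [|N IH]; first by rewrite big_ord0 mulr_ge0 ?sqr_ge0 ?divr_ge0.
have [X_le|tN_lt] := leP X (t N); first by rewrite big_ord_recr /= ltNge X_le mul0r addr0.
rewrite (eq_bigr (fun k : 'I_N.+1 => t k ^+ 2)) => [|k _]; last first.
  by rewrite (le_lt_trans (ler_level (ltnSE (ltn_ord k))) tN_lt) mul1r.
apply: le_trans (sum_level_sqr_le N) _; rewrite ler_pM2l ?divr_gt0 ?ltr0n //.
by rewrite lerXn2r ?nnegrE ?(ltW tN_lt) ?(ltW (level_gt0 N)) ?(ltW (lt_trans (level_gt0 N) tN_lt)).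
Qed.

Lemma sum_level_gap_le (x y : R) N : 0 <= y ->
  \sum_(k < N) ((y <= t k) && (4%:R * t k < x))%R%:R * t k ^+ 2 <= (x - y) ^+ 2.
Proof.
move=> y_ge0; have [y_lt|x_le] := ltP (4%:R * y) x; last first.
  rewrite big1 ?sqr_ge0 // => k _.
  by case: (boolP (_ && _)) => [/andP [y_le lt_x]|]; rewrite ?mul0r //; lra.
apply: le_trans (_ : \sum_(k < N) (t k < x / 4%:R)%R%:R * t k ^+ 2 <= _).
  apply: ler_sum => k _; case: (boolP (_ && _)) => [/andP [_ lt_x]|_].
    by rewrite (_ : t k < x / 4%:R) // ltr_pdivlMr ?ltr0n // mulrC.
  by rewrite mul0r mulr_ge0 ?ler0n ?sqr_ge0.
by apply: le_trans (sum_level_lt_sqr_le _ _) _; nra.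
Qed.

End Grid.

Section LevelSets.
Variables (R : realType) (n : nat) (e : rel 'I_n) (g : 'I_n -> R).
Hypothesis g_ge0 : forall i, 0 <= g i.
Local Notation d i := ((deg e i)%:R : R).

Definition close i j := e i j && (`|g j - g i| <= g i / 2).
Definition close_count i : R := \sum_j (close i j)%:R.
Definition good i := (0 < g i) && (d i < 2 * close_count i).
Definition bad i := (0 < g i) && ~~ good i.

Lemma bad_mass_le i : bad i -> d i * g i ^+ 2 <= 8 * local_energy e g i.
Proof.
case/andP => gi_gt0; rewrite /good gi_gt0 /= -leNgt => few_close.
pose far := \sum_j (e i j && ~~ close i j)%:R : R.
have far_ge0 : 0 <= far by apply: sumr_ge0 => j _; rewrite ler0n.
have d_split : d i = close_count i + far.
  rewrite degE /close_count /far -big_split /=; apply: eq_bigr => j _.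
  by rewrite /close; case: (e i j); case: (_ <= _); rewrite /= ?addr0 ?add0r.
have far_energy : far * (g i / 2) ^+ 2 <= local_energy e g i.
  rewrite /far mulr_suml; apply: ler_sum => j _; rewrite /close.
  case: (e i j) => /=; last by rewrite !mul0r.
  case: (leP `|g j - g i| (g i / 2)) => /= [_|far_j]; first by rewrite mul0r mul1r sqr_ge0.
  have half_gt0 : 0 < g i / 2 by rewrite divr_gt0.
  rewrite !mul1r; rewrite -normrN opprB in far_j.
  rewrite -[(g i - g j) ^+ 2]real_normK ?num_real // lerXn2r ?nnegrE ?ltW //.
  exact: lt_trans far_j.
nra.
Qed.

Variable m : R.
Hypothesis m_gt0 : 0 < m.
Local Notation t := (level m).

Definition free_level k := [forall i, good i ==> ~~ ((t k < g i) && (g i <= t k.+1))].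

(* A common close neighbour [j] would have [t a / 2 < g j <= 3 / 2 * t b.+1 <= 3 / 8 * t a]. *)
Lemma close_disjoint v w j a b : (b.+2 <= a)%N -> t a < g v -> g w <= t b.+1 ->
  ~~ (close v j && close w j).
Proof.
move=> ba v_high w_low; apply/negP => /andP [/andP [_ close_v] /andP [_ close_w]].
move: close_v close_w; rewrite !ler_norml => /andP [? ?] /andP [? ?].
have := ler_level m_gt0 ba; rewrite !levelS in w_low *.
by have := level_gt0 m_gt0 b; lra.
Qed.

Lemma sum_close_count_le L (v : 'I_L.+1 -> 'I_n) a : (2 * L <= a)%N ->
  (forall r : 'I_L.+1, t (a - 2 * r) < g (v r) <= t (a - 2 * r).+1) ->
  \sum_r close_count (v r) <= n%:R.
Proof.
move=> La v_band; rewrite /close_count exchange_big /= -[n in n%:R]card_ord -sumr_const.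
apply: ler_sum => j _; have [r0 close_r0|none] := pickP (fun r => close (v r) j); last first.
  by rewrite big1 // => r _; rewrite none.
rewrite (bigD1 r0) //= close_r0 big1 ?addr0 // => r r_neq; apply/eqP; rewrite pnatr_eq0 eqb0.
have /andP [lo0 hi0] := v_band r0; have /andP [lo hi] := v_band r.
have [r_lt|r0_lt] : (r < r0)%N \/ (r0 < r)%N.
  by move: r_neq; rewrite -val_eqE neq_ltn => /orP.
- have := @close_disjoint (v r) (v r0) j (a - 2 * r) (a - 2 * r0).
  by rewrite close_r0 andbT; apply => //; have := ltn_ord r0; lia.
- have := @close_disjoint (v r0) (v r) j (a - 2 * r0) (a - 2 * r).
  by rewrite close_r0; apply => //; have := ltn_ord r; lia.
Qed.

Lemma bad_of_free_band i k : free_level k -> t k < g i <= t k.+1 -> bad i.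
Proof.
move=> /forallP /(_ i) k_free /andP [lo hi]; rewrite /bad (lt_trans (level_gt0 m_gt0 k) lo).
by apply: contraL k_free => good_i; rewrite good_i lo hi.
Qed.

(* Each crossing of a free level is paid either by the edge itself (when the gap is large) or,
   when [i] lies in the band just above the level, by the badness of [i]. *)
Lemma free_crossings_le i j N :
  \sum_(k < N) (free_level k)%:R * ((e i j && (t k < g i) && (g j <= t k))%R%:R * t k ^+ 2)
  <= (e i j)%:R * ((g i - g j) ^+ 2 + 2 * (bad i)%:R * g i ^+ 2).
Proof.
apply: le_trans (_ : \sum_(k < N) (e i j)%:R *
    (((g j <= t k) && (4%:R * t k < g i))%R%:R * t k ^+ 2
     + (bad i)%:R * ((t k < g i)%R%:R * t k ^+ 2)) <= _).
  apply: ler_sum => k _.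
  have [k_free|_] := boolP (free_level k); last first.
    by rewrite mul0r; nonneg.
  have [/andP [/andP [-> lo] hi]|_] := boolP (e i j && (t k < g i) && (g j <= t k)); last first.
    by rewrite mul0r mulr0; nonneg.
  rewrite lo hi !mul1r; case: (ltP (4%:R * t k) (g i)) => [_|in_band].
    by rewrite mul1r lerDl; nonneg.
  have bad_i : bad i by apply: (bad_of_free_band k_free); rewrite lo levelS.
  by rewrite bad_i /= mul0r add0r mul1r.
rewrite -mulr_sumr ler_wpM2l ?ler0n // big_split /= lerD ?sum_level_gap_le //.
rewrite -mulr_sumr (mulrC 2) -[_ * 2 * _]mulrA ler_wpM2l ?ler0n //.
by apply: le_trans (sum_level_lt_sqr_le m_gt0 _ _) _; have := sqr_ge0 (g i); lra.
Qed.

Variable delta : R.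
Hypothesis min_deg : forall v, delta * n%:R <= d v.
Variable L : nat.
Hypothesis L_large : 2 <= L.+1%:R * delta.

(* Good vertices in [L + 1] well-separated bands would each own more than [delta n / 2] close
   neighbours, more than [n] in total. *)
Lemma exists_free_level a : (2 * L <= a)%N ->
  exists2 r, (r <= L)%N & free_level (a - 2 * r).
Proof.
move=> La; have [r r_free|no_free] := pickP (fun r : 'I_L.+1 => free_level (a - 2 * r)).
  by exists r; rewrite // -ltnS.
have /fin_all_exists [v v_band] : forall r : 'I_L.+1, exists w,
    good w && (t (a - 2 * r) < g w <= t (a - 2 * r).+1).
  move=> r; move/negbT: (no_free r).
  by rewrite negb_forall => /existsP [w]; rewrite negb_imply negbK; exists w.
have close_le := @sum_close_count_le L v a La (fun r => proj2 (andP (v_band r))).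
have close_gt r : delta * n%:R < 2 * close_count (v r).
  by case/andP: (v_band r) => /andP [_ d_lt] _; apply: le_lt_trans (min_deg _) d_lt.
have : \sum_(r < L.+1) delta * n%:R < \sum_(r < L.+1) 2 * close_count (v r).
  by rewrite big_ord_recl [X in _ < X]big_ord_recl ltr_leD // ler_sum // => r _; rewrite ltW.
rewrite sumr_const card_ord -mulr_sumr -mulr_natl.
by move=> sum_lt; have := ler_wpM2r (ler0n R n) L_large; move: sum_lt close_le; lra.
Qed.

Lemma free_level_below i N : good i -> t (2 * L) < g i -> g i <= t N ->
  exists k, [/\ (k < N)%N, free_level k, t k < g i & g i <= 4%:R ^+ (2 * L).+1 * t k].
Proof.
move=> good_i above below.
have [|a gi_le a_min] := ex_minnP (ex_intro (fun k => g i <= t k.+1) N _).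
  exact: le_trans below (ler_level m_gt0 (leqnSn N)).
have La : (2 * L <= a)%N.
  by rewrite leqNgt; apply/negP => /(ler_level m_gt0); lra.
have a_lt : (a < N)%N.
  case: N below a_min => [|N] below a_min; last by rewrite ltnS a_min.
  by have := ler_level m_gt0 (leq0n (2 * L)); lra.
have ta_lt : t a < g i.
  case: a gi_le a_min La a_lt => [|a] gi_le a_min La a_lt.
    exact: le_lt_trans (ler_level m_gt0 (leq0n _)) above.
  by rewrite ltNge; apply/negP => /a_min; rewrite ltnn.
have [r rL r_free] := exists_free_level La.
exists (a - 2 * r)%N; split => //.
- exact: leq_ltn_trans (leq_subr _ _) a_lt.
- exact: le_lt_trans (ler_level m_gt0 (leq_subr _ _)) ta_lt.
- apply: (le_trans gi_le); rewrite (_ : a.+1 = a - 2 * r + (2 * r).+1)%N; last by lia.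
  by rewrite levelD ler_pM2r ?level_gt0 // ler_eXn2l ?ltr1n // ltnS leq_mul2l.
Qed.

End LevelSets.

Definition poincare_const (R : realType) (L : nat) : R :=
  17%:R * (4%:R ^+ (2 * L).+1) ^+ 2 + 8%:R.

Lemma poincare_const_ge0 (R : realType) L : 0 <= poincare_const R L.
Proof. by rewrite /poincare_const; nonneg. Qed.

Section Coarea.
Variables (R : realType) (n : nat) (e : rel 'I_n) (g : 'I_n -> R).
Hypothesis g_ge0 : forall i, 0 <= g i.
Local Notation d i := ((deg e i)%:R : R).
Variables (m : R) (N : nat).
Hypothesis m_gt0 : 0 < m.
Local Notation t := (level m).
Hypothesis le_level_N : forall i, g i <= t N.

Let weight k := (free_level e g m k)%:R * t k ^+ 2.
Let superlevel k := [set i | (t k < g i)%R].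

Lemma weight_ge0 k : 0 <= weight k.
Proof. by rewrite /weight; nonneg. Qed.

Hypothesis superlevel_half :
  forall s : R, 0 < s -> (2 * Vol e [set i | (s < g i)%R] <= Vol e setT)%N.

Lemma cheeger_superlevels :
  cheeger e R * \sum_(k < N) weight k * (Vol e (superlevel k))%:R
  <= \sum_(k < N) weight k * (bdry e (superlevel k))%:R.
Proof.
rewrite mulr_sumr; apply: ler_sum => k _.
rewrite mulrCA ler_wpM2l ?weight_ge0 //.
exact/cheeger_Vol_le/superlevel_half/level_gt0.
Qed.

Lemma superlevels_bdry_le :
  \sum_(k < N) weight k * (bdry e (superlevel k))%:R <= 17%:R * dirichlet e g.
Proof.
have -> : \sum_(k < N) weight k * (bdry e (superlevel k))%:R =
    \sum_i \sum_j \sum_(k < N) (free_level e g m k)%:R *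
      ((e i j && (t k < g i) && (g j <= t k))%R%:R * t k ^+ 2).
  transitivity (\sum_(k < N) \sum_i \sum_j (free_level e g m k)%:R *
      ((e i j && (t k < g i) && (g j <= t k))%R%:R * t k ^+ 2)).
    apply: eq_bigr => k _; rewrite bdryE mulr_sumr; apply: eq_bigr => i _.
    by rewrite mulr_sumr; apply: eq_bigr => j _; rewrite !inE -leNgt /weight; ring.
  by rewrite exchange_big; apply: eq_bigr => i _; apply: exchange_big.
apply: le_trans (_ : \sum_i \sum_j (e i j)%:R *
    ((g i - g j) ^+ 2 + 2 * (bad e g i)%:R * g i ^+ 2) <= _).
  by apply: ler_sum => i _; apply: ler_sum => j _; apply: free_crossings_le.
have -> : \sum_i \sum_j (e i j)%:R * ((g i - g j) ^+ 2 + 2 * (bad e g i)%:R * g i ^+ 2)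
    = dirichlet e g + \sum_i 2 * (bad e g i)%:R * (d i * g i ^+ 2).
  rewrite /dirichlet -big_split /=; apply: eq_bigr => i _.
  by rewrite degE mulr_suml mulr_sumr -big_split /=; apply: eq_bigr => j _; ring.
suff : \sum_i 2 * (bad e g i)%:R * (d i * g i ^+ 2) <= 16%:R * dirichlet e g by lra.
rewrite /dirichlet mulr_sumr; apply: ler_sum => i _.
have [bad_i|_] := boolP (bad e g i); last by rewrite mulr0 mul0r mulr_ge0 ?local_energy_ge0.
by rewrite mulr1; have := bad_mass_le bad_i; lra.
Qed.

Variables (delta : R) (L : nat).
Hypothesis min_deg : forall v, delta * n%:R <= d v.
Hypothesis L_large : 2 <= L.+1%:R * delta.
Hypothesis level_2L_lt : forall i, 0 < g i -> t (2 * L) < g i.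

(* A bad vertex pays for its mass with its local energy, a good one with a free level at most
   [2 L + 1] grid steps below it. *)
Lemma deg_sqnorm_le_superlevels :
  deg_sqnorm e g <= (4%:R ^+ (2 * L).+1) ^+ 2 * \sum_(k < N) weight k * (Vol e (superlevel k))%:R
                    + 8%:R * dirichlet e g.
Proof.
set K := (4%:R ^+ (2 * L).+1) ^+ 2 : R.
have K_gt0 : 0 < K by rewrite exprn_gt0 // exprn_gt0 // ltr0n.
have -> : \sum_(k < N) weight k * (Vol e (superlevel k))%:R =
    \sum_i d i * \sum_(k < N) weight k * (t k < g i)%R%:R.
  under eq_bigr do rewrite VolE mulr_sumr.
  rewrite exchange_big; apply: eq_bigr => i _; rewrite mulr_sumr.
  by apply: eq_bigr => k _; rewrite inE; ring.
rewrite /deg_sqnorm /dirichlet !mulr_sumr -big_split /=; apply: ler_sum => i _.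
have levels_ge0 : 0 <= \sum_(k < N) weight k * (t k < g i)%R%:R.
  by apply: sumr_ge0 => k _; rewrite mulr_ge0 ?weight_ge0.
have energy_ge0 := local_energy_ge0 e g i.
have d_ge0 : 0 <= d i by [].
have levels_mass_ge0 := mulr_ge0 (ltW K_gt0) (mulr_ge0 d_ge0 levels_ge0).
have [gi_gt0|gi_le0] := ltP 0 (g i); last first.
  have -> : g i ^+ 2 = 0.
    by rewrite (_ : g i = 0) ?expr0n //; apply/le_anti; rewrite gi_le0 g_ge0.
  by rewrite mulr0; lra.
have [good_i|not_good] := boolP (good e g i); last first.
  have bad_i : bad e g i by rewrite /bad gi_gt0.
  by have := bad_mass_le bad_i; lra.
have [k0 [k0_lt k0_free lo hi]] :=
  free_level_below m_gt0 min_deg L_large good_i (level_2L_lt gi_gt0) (le_level_N i).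
have k0_levels : t k0 ^+ 2 <= \sum_(k < N) weight k * (t k < g i)%R%:R.
  rewrite (bigD1 (Ordinal k0_lt)) //= /weight k0_free lo /= mul1r mulr1 lerDl.
  by apply: sumr_ge0 => k _; rewrite mulr_ge0 ?weight_ge0.
have gi_sqr : g i ^+ 2 <= K * t k0 ^+ 2.
  by rewrite /K -exprMn lerXn2r // nnegrE ?g_ge0 // mulr_ge0 ?exprn_ge0 ?ler0n ?ltW ?level_gt0.
have := ler_wpM2l d_ge0 gi_sqr; have := ler_wpM2l (mulr_ge0 d_ge0 (ltW K_gt0)) k0_levels.
lra.
Qed.

Lemma cheeger_deg_sqnorm_le_levels :
  cheeger e R * deg_sqnorm e g <= poincare_const R L * dirichlet e g.
Proof.
have := deg_sqnorm_le_superlevels.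
set K := _ ^+ 2 => mass_le.
have K_ge0 : 0 <= K by nonneg.
have := ler_wpM2l (cheeger_ge0 R e) mass_le.
have := ler_wpM2l K_ge0 cheeger_superlevels.
have := ler_wpM2l K_ge0 superlevels_bdry_le.
have := ler_wpM2r (dirichlet_ge0 e g) (cheeger_le1 R e).
rewrite /poincare_const -/K; lra.
Qed.

End Coarea.

Lemma sqr_maxr0 (R : realDomainType) (x : R) :
  Num.max x 0 ^+ 2 + Num.max (- x) 0 ^+ 2 = x ^+ 2.
Proof. by rewrite !maxEle oppr_le0; case: (leP x 0); case: (leP 0 x); rewrite ?expr2; nra. Qed.

Lemma maxr0_dist (R : realDomainType) (a b : R) :
  (Num.max a 0 - Num.max b 0) ^+ 2 + (Num.max (- a) 0 - Num.max (- b) 0) ^+ 2 <= (a - b) ^+ 2.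
Proof.
rewrite !maxEle !oppr_le0.
by case: (leP a 0); case: (leP 0 a); case: (leP b 0); case: (leP 0 b); nra.
Qed.

Section Poincare.
Variables (R : realType) (n : nat) (e : rel 'I_n) (delta : R) (L : nat).
Hypothesis min_deg : forall v, delta * n%:R <= (deg e v)%:R.
Hypothesis L_large : 2 <= L.+1%:R * delta.
Local Notation d i := ((deg e i)%:R : R).

Lemma cheeger_deg_sqnorm_le (g : 'I_n -> R) : (forall i, 0 <= g i) ->
  (forall s : R, 0 < s -> (2 * Vol e [set i | (s < g i)%R] <= Vol e setT)%N) ->
  cheeger e R * deg_sqnorm e g <= poincare_const R L * dirichlet e g.
Proof.
move=> g_ge0 superlevel_half.
have [i0 gi0_gt0|g_le0] := pickP (fun i => 0 < g i); last first.
  rewrite /deg_sqnorm big1 ?mulr0 ?mulr_ge0 ?poincare_const_ge0 ?dirichlet_ge0 // => i _.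
  have -> : g i = 0 by apply/le_anti; rewrite g_ge0 andbT leNgt g_le0.
  by rewrite expr0n mulr0.
have [j0 gj0_gt0 j0_min] := arg_minP g (gi0_gt0 : (fun i => 0 < g i) i0).
(* Level [2 L] of the grid lies strictly below the least positive value of [g]. *)
pose m := g j0 / 4%:R ^+ (2 * L).+1.
have m_gt0 : 0 < m by rewrite divr_gt0 // exprn_gt0 // ltr0n.
have [N N_large] : exists N, (\sum_i g i) / m < N%:R.
  exists (Num.Def.archi_bound ((\sum_i g i) / m)); apply: archi_boundP.
  by apply: divr_ge0; [apply: sumr_ge0 | apply: ltW].
apply: (@cheeger_deg_sqnorm_le_levels _ _ _ _ g_ge0 m N m_gt0 _ superlevel_half
  delta L min_deg L_large).
- move=> i; have gi_le : g i <= \sum_i g i by rewrite (bigD1 i) //= lerDl sumr_ge0.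
  apply: (le_trans gi_le); apply: ltW; apply: (lt_le_trans (_ : _ < N%:R * m)).
    by rewrite -ltr_pdivrMr.
  by rewrite /level mulrC ler_pM2l // -natrX ler_nat ltnW // ltn_expl.
- move=> i gi_gt0; apply: lt_le_trans (j0_min i gi_gt0).
  rewrite /level /m exprS invfM mulrA -mulrA mulVf ?mulr1 ?expf_neq0 ?pnatr_eq0 //.
  by rewrite gtr_pMr // invf_lt1 ?ltr0n ?ltr1n.
Qed.

Lemma poincare_inequality (u : 'I_n -> R) : \sum_i d i * u i = 0 ->
  cheeger e R * deg_sqnorm e u <= poincare_const R L * dirichlet e u.
Proof.
move=> u_balanced; case: (posnP n) => [n0|n_gt0].
  have -> : deg_sqnorm e u = 0.
    by rewrite /deg_sqnorm big1 // => i; have := ltn_ord i; rewrite [X in (_ < X)%N]n0.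
  by rewrite mulr0 mulr_ge0 ?poincare_const_ge0 ?dirichlet_ge0.
have [c [above_half below_half]] := median_exists e u n_gt0.
pose up i := Num.max (u i - c) 0; pose down i := Num.max (- (u i - c)) 0.
have half_superlevel (f : 'I_n -> R) (S : {set 'I_n}) :
    (forall s i, 0 < s -> s < f i -> i \in S) -> (2 * Vol e S <= Vol e setT)%N ->
    forall s : R, 0 < s -> (2 * Vol e [set i | (s < f i)%R] <= Vol e setT)%N.
  move=> sub S_half s s_gt0; apply: leq_trans S_half; rewrite leq_mul2l Vol_subset //.
  by apply/subsetP => i; rewrite inE; apply: sub.
have maxr0_ge0 (x : R) : 0 <= Num.max x 0 by rewrite le_max orbC lexx.
have gt0_of_lt_maxr0 (s x : R) : 0 < s -> s < Num.max x 0 -> 0 < x.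
  by move=> s_gt0; rewrite lt_max [s < 0]ltNge (ltW s_gt0) orbF; apply: lt_trans.
have up_le : cheeger e R * deg_sqnorm e up <= poincare_const R L * dirichlet e up.
  apply: cheeger_deg_sqnorm_le => [i|]; first exact: maxr0_ge0.
  apply: (half_superlevel _ _ _ above_half) => s i s_gt0 /(gt0_of_lt_maxr0 _ _ s_gt0).
  by rewrite inE subr_gt0.
have down_le : cheeger e R * deg_sqnorm e down <= poincare_const R L * dirichlet e down.
  apply: cheeger_deg_sqnorm_le => [i|]; first exact: maxr0_ge0.
  apply: (half_superlevel _ _ _ below_half) => s i s_gt0 /(gt0_of_lt_maxr0 _ _ s_gt0).
  by rewrite inE oppr_gt0 subr_lt0.
have energy_split : dirichlet e up + dirichlet e down <= dirichlet e u.
  rewrite /dirichlet -big_split /=; apply: ler_sum => i _.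
  rewrite /local_energy -big_split /=; apply: ler_sum => j _.
  rewrite -mulrDr ler_wpM2l ?ler0n //.
  have -> : u i - u j = (u i - c) - (u j - c) by ring.
  exact: maxr0_dist.
have mass_split : deg_sqnorm e u <= deg_sqnorm e up + deg_sqnorm e down.
  have -> : deg_sqnorm e up + deg_sqnorm e down =
      deg_sqnorm e u - 2 * c * \sum_i d i * u i + c ^+ 2 * \sum_i d i.
    rewrite /deg_sqnorm -big_split !mulr_sumr -sumrB -big_split /=.
    by apply: eq_bigr => i _; rewrite -mulrDr sqr_maxr0; ring.
  by rewrite u_balanced mulr0 subr0 lerDl mulr_ge0 ?sqr_ge0 ?sumr_ge0.
have := ler_wpM2l (cheeger_ge0 R e) mass_split.
have := ler_wpM2l (poincare_const_ge0 R L) energy_split.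
lra.
Qed.

End Poincare.

Section TransitionMatrix.
Variables (R : realType) (n : nat) (e : rel 'I_n).
Hypothesis e_sym : symmetric e.
Hypothesis deg_gt0 : forall i, (0 < deg e i)%N.
Local Notation d i := ((deg e i)%:R : R).

Lemma trans_mxE i j : trans_mx e R i j = (e i j)%:R / d i.
Proof. by rewrite mxE; case: (e i j); rewrite ?mul1r ?mul0r. Qed.

Lemma trans_mx_stochastic i : \sum_j trans_mx e R i j = 1.
Proof.
under eq_bigr do rewrite trans_mxE.
by rewrite -mulr_suml -degE divff // pnatr_eq0 -lt0n.
Qed.

(* [u = v / deg] turns a left eigenvector of [P] into a right eigenvector of the adjacency
   matrix relative to the degrees. *)
Lemma left_eigenvector_dirichlet (v : 'rV[R]_n) lam :
  v != 0 -> v *m trans_mx e R = lam *: v -> \sum_j v ord0 j = 0 ->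
  exists u : 'I_n -> R, [/\ \sum_i d i * u i = 0, 0 < deg_sqnorm e u &
    dirichlet e u = 2 * (1 - lam) * deg_sqnorm e u].
Proof.
move=> v_neq0 v_eigen v_sum0; pose u i := v ord0 i / d i.
have d_neq0 i : d i != 0 by rewrite pnatr_eq0 -lt0n.
have vE i : v ord0 i = d i * u i by rewrite /u mulrC divfK.
exists u; split.
- by rewrite -[RHS]v_sum0; apply: eq_bigr => i _; rewrite vE.
- have [i vi_neq0] : exists i, v ord0 i != 0.
    apply/existsP; apply: contraR v_neq0; rewrite negb_exists => /forallP v0.
    by apply/eqP/rowP => i; rewrite mxE; apply/eqP; rewrite -[_ == _]negbK v0.
  rewrite /deg_sqnorm (bigD1 i) //= ltr_pwDl ?sumr_ge0 // => [|k _].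
    rewrite mulr_gt0 ?ltr0n // exprn_even_gt0 //.
    by move: vi_neq0; rewrite vE mulf_eq0 negb_or => /andP [].
  by rewrite mulr_ge0 ?ler0n ?sqr_ge0.
- apply: dirichlet_eigen => // j.
  have := congr1 (fun M : 'rV[R]_n => M ord0 j) v_eigen; rewrite !mxE -mulrA -vE => <-.
  by apply: eq_bigr => i _; rewrite trans_mxE vE; field.
Qed.

End TransitionMatrix.

Lemma min_deg_gt0 (R : realType) n (e : rel 'I_n.+1) (delta : R) : 0 < delta ->
  (forall v, delta * n.+1%:R <= (deg e v)%:R) -> forall i, (0 < deg e i)%N.
Proof.
move=> delta_gt0 min_deg i; rewrite -(ltr0n R).
by apply: lt_le_trans (min_deg i); rewrite mulr_gt0 ?ltr0Sn.
Qed.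

Lemma spectral_gap_deflate (R : realType) n (e : rel 'I_n.+1) (delta : R) L lam :
  symmetric e -> 0 < delta -> (forall v, delta * n.+1%:R <= (deg e v)%:R) ->
  2 <= L.+1%:R * delta -> root (char_poly (deflate (trans_mx e R))) lam ->
  lam <= 1 /\ cheeger e R <= 2 * poincare_const R L * (1 - lam).
Proof.
move=> e_sym delta_gt0 min_deg L_large root_lam.
have deg_gt0 := min_deg_gt0 delta_gt0 min_deg.
have [v [v_neq0 v_eigen v_sum0]] :=
  deflate_eigenvector (trans_mx_stochastic R deg_gt0) root_lam.
have [u [u_balanced mass_gt0 energy_eq]] :=
  left_eigenvector_dirichlet e_sym deg_gt0 v_neq0 v_eigen v_sum0.
have := poincare_inequality min_deg L_large u_balanced; have := dirichlet_ge0 e u.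
rewrite energy_eq; split; first by nra.
by rewrite -(ler_pM2r mass_gt0); nra.
Qed.

Lemma sorted_second_root (R : realDomainType) (s : seq R) (q : {poly R}) :
  sorted >=%R s -> \prod_(x <- s) ('X - x%:P) = ('X - 1%:P) * q ->
  (forall x, root q x -> x <= 1) -> (1 < size s)%N -> root q s`_1.
Proof.
case: s => [|s0 [|s1 s]] //= /andP [s10 _] char_s roots_le1 _.
have root_q x : x != 1 -> x \in [:: s0, s1 & s] -> root q x.
  move=> x_neq1 x_in; have : root (('X - 1%:P) * q) x.
    by rewrite -char_s root_prod_XsubC.
  by rewrite rootM root_XsubC (negPf x_neq1).
have [s1_1|] := eqVneq s1 1; last by move/root_q; apply; rewrite !inE eqxx orbT.
have [s0_1|s0_neq1] := eqVneq s0 1; last first.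
  have s0_le1 := roots_le1 _ (root_q _ s0_neq1 (mem_head _ _)).
  by move: s0_neq1; rewrite eq_le s0_le1 -s1_1 s10.
move: char_s; rewrite !big_cons s0_1 s1_1 => /mulfI <- //; last by rewrite monic_neq0 ?monicXsubC.
by rewrite rootM root_XsubC eqxx.
Qed.

Lemma sorted_spectrum_size (R : realType) n (e : rel 'I_n) (s : seq R) :
  sorted_spectrum e s -> size s = n.
Proof.
by case=> _ char_s; have := size_char_poly (trans_mx e R); rewrite char_s size_prod_XsubC => -[].
Qed.

Lemma cheeger_le_second_eigenvalue (R : realType) n (e : rel 'I_n) (delta : R) L s :
  symmetric e -> 0 < delta -> (forall v, delta * n%:R <= (deg e v)%:R) ->
  2 <= L.+1%:R * delta -> sorted_spectrum e s -> (1 < size s)%N ->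
  cheeger e R <= 2 * poincare_const R L * (1 - s`_1).
Proof.
move=> e_sym delta_gt0 min_deg L_large s_spec size_gt1.
case: n e e_sym min_deg s_spec => [|n] e e_sym min_deg s_spec.
  by rewrite (sorted_spectrum_size s_spec) in size_gt1.
case: s_spec => s_sorted char_s.
have char_deflate :=
  char_poly_deflate (trans_mx_stochastic R (min_deg_gt0 delta_gt0 min_deg)).
have roots_le1 x : root (char_poly (deflate (trans_mx e R))) x -> x <= 1.
  by case/(spectral_gap_deflate e_sym delta_gt0 min_deg L_large).
have := sorted_second_root s_sorted (etrans (esym char_s) char_deflate) roots_le1 size_gt1.
by case/(spectral_gap_deflate e_sym delta_gt0 min_deg L_large).
Qed.

Unset Implicit Arguments.

Theorem theorem1p2 (R : realType) (delta : R) :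
  0 < delta < 1 ->
  exists c : R, 0 < c /\
    forall (n : nat) (e : rel 'I_n),
      simple_graph e ->
      (forall v : 'I_n, delta * n%:R <= (deg e v)%:R) ->
      forall s : seq R, sorted_spectrum e s ->
        (* spectral gap gamma(G) = 1 - lambda_2 with lambda_2 = s`_1 *)
        c * cheeger e R <= 1 - s`_1.
Proof.
move=> /andP [delta_gt0 _].
have [L L_large] : exists L : nat, 2 <= L.+1%:R * delta.
  exists (Num.Def.archi_bound (2 / delta)); rewrite -ler_pdivrMr //.
  have /archi_boundP/ltW/le_trans : 0 <= 2 / delta by rewrite divr_ge0 ?ltW.
  by apply; rewrite ler_nat.
have C_ge8 : 8 <= poincare_const R L by rewrite lerDr; nonneg.
pose c := (2 * poincare_const R L)^-1.
have c_gt0 : 0 < c by rewrite invr_gt0; lra.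
have c_le1 : c <= 1 by rewrite invf_le1; lra.
exists c; split => // n e [e_sym _] min_deg s s_spec.
have [size_le1|size_gt1] := leqP (size s) 1.
  rewrite nth_default // subr0; have := cheeger_ge0 R e; have := cheeger_le1 R e.
  by move: c_le1 c_gt0; nra.
have gap := cheeger_le_second_eigenvalue e_sym delta_gt0 min_deg L_large s_spec size_gt1.
apply: le_trans (ler_wpM2l (ltW c_gt0) gap) _.
by rewrite /c mulrA mulVf ?mul1r //; lra.
Qed.
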